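(* Let $V\ge 0$ be an integrable random variable with mean $\mu=\mathbb{E}[V]$ and let $c\ge 0$. Let $u^{\mathsf{rsv}}, u^{\mathsf{bkp}}, W^{\mathsf{OI}}, W^{\mathsf{NOI}}$ be as defined in the context. Then for every $r\in\mathbb{R}$, \[ \min\{c+\mathbb{E}[\min\{V,r\}],\ r\}=\mathbb{E}[\min\{W^{\mathsf{OI}},r\}], \qquad \min\{c+\mathbb{E}[\min\{V,r\}],\ r,\ \mu\}=\mathbb{E}[\min\{W^{\mathsf{NOI}},r\}]. \] (The left-hand sides are the optimal expected costs of choosing between one item with price $V$ and inspection cost $c$ and an outside option of known cost $r$, under obligatory and nonobligatory inspection respectively.)
   Context: An item has inspection cost $c\ge 0$ and a random hidden price $V\ge 0$ with finite mean $\mu=\mathbb{E}[V]$. Its reservation price $u^{\mathsf{rsv}}$ and backup price $u^{\mathsf{bkp}}$ are defined by $\mathbb{E}[(u^{\mathsf{rsv}}-V)^+]=c$ and $\mathbb{E}[(V-u^{\mathsf{bkp}})^+]=c$ (when $c>0$ these solutions are unique; in general take $u^{\mathsf{rsv}}=\sup\{u:\mathbb{E}[(u-V)^+]\le c\}$ and $u^{\mathsf{bkp}}=\inf\{u:\mathbb{E}[(V-u)^+]\le c\}$, possibly $+\infty$). The obligatory-inspection surrogate price is the random variable $W^{\mathsf{OI}}=\max\{V,u^{\mathsf{rsv}}\}$. The nonobligatory-inspection surrogate price is the random variable $W^{\mathsf{NOI}}=\min\{W^{\mathsf{OI}},u^{\mathsf{bkp}}\}$ if $u^{\mathsf{rsv}}<u^{\mathsf{bkp}}$,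 and $W^{\mathsf{NOI}}=\mu$ (deterministically) if $u^{\mathsf{rsv}}\ge u^{\mathsf{bkp}}$. *)

From HB Require Import structures.
From mathcomp Require Import all_boot all_order all_algebra.
From mathcomp Require Import all_classical all_reals all_analysis.
Set Implicit Arguments. Unset Strict Implicit. Unset Printing Implicit Defensive.
Import Order.TTheory GRing.Theory Num.Theory.
Local Open Scope ring_scope.
Local Open Scope ereal_scope.

Section surrogate.
Context {d : measure_display} {T : measurableType d} {R : realType}
  (P : probability T R) (V : {RV P >-> R}) (c : R).

Definition mean_price : \bar R := 'E_P[V].

Definition u_rsv : \bar R :=
  ereal_sup [set u%:E | u in [set u : R |
     \int[P]_w (Num.max (u - V w) 0)%:E <= c%:E]].

Definition u_bkp : \bar R :=
  ereal_inf [set u%:E | u in [set u : R |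
     \int[P]_w (Num.max (V w - u) 0)%:E <= c%:E]].

Definition W_OI (w : T) : \bar R := maxe (V w)%:E u_rsv.

Definition W_NOI (w : T) : \bar R :=
  if u_rsv < u_bkp then mine (W_OI w) u_bkp else mean_price.

End surrogate.

Arguments mean_price {d T R} P V.
Arguments u_rsv {d T R} P V c.
Arguments u_bkp {d T R} P V c.
Arguments W_OI {d T R} P V c w.
Arguments W_NOI {d T R} P V c w.

(* Everything is governed by the truncated mean m u = E[min(V, u)], a
   nondecreasing 1-Lipschitz function of u.  Both pricing equations are
   linear in it: E[(u - V)^+] = u - m u and E[(V - u)^+] = mu - m u, so u_rsv
   and u_bkp are the roots of these nondecreasing and nonincreasing continuous
   functions at level c (u_bkp being +oo when mu - m u > c everywhere).  Since
   min(max(V, a), s) = min(V, s) + a - min(V, a) for a <= s, one gets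
   E[min(max(V, a), s)] = min(m s + a - m a, s) for all a, s, and both
   identities reduce to inequalities between values of m. *)

From HB Require Import structures.
From mathcomp Require Import all_boot all_order all_algebra.
From mathcomp Require Import all_classical all_reals all_analysis.
From mathcomp Require Import lra measurable_realfun.
Import Order.TTheory GRing.Theory Num.Theory.
Local Open Scope ring_scope.
Local Open Scope ereal_scope.

Ltac lra_minmax := rewrite /Order.min /Order.max /=;
  repeat (match goal with |- context [(?x < ?y)%R] =>
    lazymatch x with context [if _ then _ else _] => fail | _ =>
    lazymatch y with context [if _ then _ else _] => fail | _ =>
      case: (ltP x y) => ?; rewrite /= end end end); lra.

Section sublevel_sets.
Variable R : realType.
Local Open Scope ring_scope.

Lemma sup_sublevel_eq (f : R -> R) (c : R) :
  (forall u v, u <= v -> f v <= f u + (v - u)) ->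
  has_sup [set u | f u <= c]%classic -> f (sup [set u | f u <= c]%classic) = c.
Proof.
set S := [set u | f u <= c]%classic => f_lip supS; set s := sup S.
have le_s u : S u -> u <= s by exact: sup_upper_bound.
apply/eqP; rewrite eq_le; apply/andP; split.
- apply/ler_addgt0Pr => e e_gt0.
  have [u Su] := sup_adherent e_gt0 supS; rewrite -/s => lt_u.
  by have := f_lip u s (le_s u Su); move: Su; rewrite /S /=; lra.
- rewrite leNgt; apply/negP => lt_fs.
  have s_le : s <= s + (c - f s) by lra.
  have Su : S (s + (c - f s)) by rewrite /S /=; have := f_lip _ _ s_le; lra.
  by have := le_s _ Su; lra.
Qed.

Lemma inf_sublevel_eq (f : R -> R) (c : R) :
  (forall u v, u <= v -> f u <= f v + (v - u)) ->
  has_inf [set u | f u <= c]%classic -> f (inf [set u | f u <= c]%classic) = c.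
Proof.
set S := [set u | f u <= c]%classic => f_lip infS; set s := inf S.
have ge_s u : S u -> s <= u by exact: (ge_inf infS.2).
apply/eqP; rewrite eq_le; apply/andP; split.
- apply/ler_addgt0Pr => e e_gt0.
  have [u Su] := inf_adherent e_gt0 infS; rewrite -/s => lt_u.
  by have := f_lip s u (ge_s u Su); move: Su; rewrite /S /=; lra.
- rewrite leNgt; apply/negP => lt_fs.
  have le_s : s - (c - f s) <= s by lra.
  have Su : S (s - (c - f s)) by rewrite /S /=; have := f_lip _ _ le_s; lra.
  by have := ge_s _ Su; lra.
Qed.

End sublevel_sets.

Section truncated_mean.
Context {d : measure_display} {T : measurableType d} {R : realType} (P : probability T R)
  (V : {RV P >-> R}).
Hypothesis V_int : P.-integrable setT (EFin \o V).

Local Notation mu := (fine (mean_price P V)).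

Lemma integral_cst_probability (k : R) : \int[P]_w k%:E = k%:E.
Proof. by rewrite -[RHS]mule1 -(probability_setT P) integral_cst. Qed.

Lemma integrable_minr_cst (u : R) :
  P.-integrable setT (fun w => (Num.min (V w) u)%:E).
Proof.
apply: (le_integrable measurableT (g := fun w => (`|V w| + `|u|)%:E)).
- by apply/measurable_EFinP; apply: measurable_minr.
- move=> w _; rewrite lee_fin [X in (_ <= X)%R]ger0_norm ?addr_ge0 //.
  by rewrite /Num.min; case: ifP => _; rewrite ?lerDl ?lerDr.
- apply: (eq_integrable measurableT (fun w => `|V w|%:E + `|u|%:E)%E) => //.
  apply: integrableD => //; last exact: finite_measure_integrable_cst.
  exact: integrable_norm.
Qed.

Definition truncmean (u : R) : R := fine (\int[P]_w (Num.min (V w) u)%:E).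

Lemma truncmeanE (u : R) :
  \int[P]_w (Num.min (V w) u)%:E = (truncmean u)%:E.
Proof. by rewrite fineK // integrable_fin_num //; exact: integrable_minr_cst. Qed.

Lemma mean_priceE : mean_price P V = mu%:E.
Proof. by rewrite fineK // /mean_price expectation_def integrable_fin_num. Qed.

Lemma integral_mean : \int[P]_w (V w)%:E = mu%:E.
Proof. by rewrite -mean_priceE /mean_price expectation_def. Qed.

Lemma integral_addr_subr (f g : T -> R) (k : R) :
  P.-integrable setT (EFin \o f) -> P.-integrable setT (EFin \o g) ->
  \int[P]_w (f w + k - g w)%:E = \int[P]_w (f w)%:E + k%:E - \int[P]_w (g w)%:E.
Proof.
move=> f_int g_int.
have fk_int : P.-integrable setT (EFin \o (fun w => f w + k)%R).
  apply: (eq_integrable measurableT (fun w => (f w)%:E + k%:E)) => //.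
  by apply: integrableD => //; exact: finite_measure_integrable_cst.
rewrite integralB_EFin //.
under eq_integral do rewrite /= EFinD.
rewrite integralD_EFin //; last exact: finite_measure_integrable_cst.
by rewrite /= integral_cst_probability.
Qed.

Lemma le_truncmean : {homo truncmean : u v / (u <= v)%R}.
Proof.
move=> u v uv; rewrite -lee_fin -!truncmeanE.
apply: le_integral => //; try exact: integrable_minr_cst.
by move=> w _; rewrite lee_fin; lra_minmax.
Qed.

Lemma truncmean_lipschitz {u v : R} :
  (u <= v)%R -> (truncmean v <= truncmean u + (v - u))%R.
Proof.
move=> uv; rewrite -lee_fin EFinD -!truncmeanE -integral_cst_probability.
rewrite -integralD_EFin //; last first.
- exact: finite_measure_integrable_cst.
- exact: integrable_minr_cst.
apply: le_integral => //; first exact: integrable_minr_cst.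
- apply: integrableD => //; first exact: integrable_minr_cst.
  exact: finite_measure_integrable_cst.
- by move=> w _; rewrite lee_fin; lra_minmax.
Qed.

Lemma truncmean_le (u : R) : (truncmean u <= u)%R.
Proof.
rewrite -lee_fin -truncmeanE -[leRHS]integral_cst_probability.
apply: le_integral => //; first exact: integrable_minr_cst.
- exact: finite_measure_integrable_cst.
- by move=> w _; rewrite lee_fin; lra_minmax.
Qed.

Lemma truncmean_le_mean (u : R) : (truncmean u <= mu)%R.
Proof.
rewrite -lee_fin -truncmeanE -integral_mean.
apply: le_integral => //; first exact: integrable_minr_cst.
by move=> w _; rewrite lee_fin; lra_minmax.
Qed.

Lemma truncmean0 : (forall w, 0 <= V w)%R -> truncmean 0 = 0%R.
Proof.
move=> V_ge0; apply: EFin_inj; rewrite -truncmeanE -integral_cst_probability.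
apply: eq_integral => w _.
by congr EFin; have := V_ge0 w; lra_minmax.
Qed.

Lemma integral_shortfall (u : R) :
  \int[P]_w (Num.max (u - V w) 0)%:E = (u - truncmean u)%:E.
Proof.
transitivity (\int[P]_w (0 + u - Num.min (V w) u)%:E).
  by apply: eq_integral => w _; congr EFin; lra_minmax.
rewrite integral_addr_subr; last exact: integrable_minr_cst.
  by rewrite integral_cst_probability truncmeanE add0e EFinB.
exact: finite_measure_integrable_cst.
Qed.

Lemma integral_excess (u : R) :
  \int[P]_w (Num.max (V w - u) 0)%:E = (mu - truncmean u)%:E.
Proof.
transitivity (\int[P]_w (V w + 0 - Num.min (V w) u)%:E).
  by apply: eq_integral => w _; congr EFin; lra_minmax.
rewrite integral_addr_subr //; last exact: integrable_minr_cst.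
by rewrite integral_mean truncmeanE adde0 EFinB.
Qed.

Lemma integral_minr_maxr (a s : R) :
  \int[P]_w (Num.min (Num.max (V w) a) s)%:E
    = (Num.min (truncmean s + a - truncmean a) s)%:E.
Proof.
have [sa|lt_as] := leP s a.
  rewrite -[RHS]integral_cst_probability; apply: eq_integral => w _.
  by congr EFin; have := truncmean_lipschitz sa; lra_minmax.
transitivity (\int[P]_w (Num.min (V w) s + a - Num.min (V w) a)%:E).
  by apply: eq_integral => w _; congr EFin; lra_minmax.
rewrite integral_addr_subr; try exact: integrable_minr_cst.
rewrite !truncmeanE; congr EFin.
by have := truncmean_lipschitz (ltW lt_as); lra_minmax.
Qed.

Section surrogate_prices.
Variable c : R.
Hypotheses (V_ge0 : forall w, (0 <= V w)%R) (c_ge0 : (0 <= c)%R).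

Local Notation m := truncmean.

Lemma u_rsv_spec : exists2 a : R, u_rsv P V c = a%:E & (a - m a = c)%R.
Proof.
set S := [set u : R | (u - m u <= c)%R]%classic.
have S0 : S 0%R by rewrite /S /= truncmean0 // subr0.
have supS : has_sup S.
  split; first by exists 0%R.
  by exists (c + mu)%R => u; rewrite /S /=; have := truncmean_le_mean u; lra.
exists (sup S).
  rewrite /u_rsv -ereal_sup_EFin; [congr ereal_sup | by case: supS | by exists 0%R].
  by congr (image _ _); apply/seteqP; split => u /=; rewrite integral_shortfall lee_fin.
apply: (@sup_sublevel_eq R (fun u => u - m u)%R) => // u v /le_truncmean; lra.
Qed.

Lemma u_bkp_spec :
  (u_bkp P V c = +oo /\ forall u, (c < mu - m u)%R) \/
  exists2 b : R, u_bkp P V c = b%:E & (mu - m b = c)%R.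
Proof.
set B := [set u : R | (mu - m u <= c)%R]%classic.
have bkpE : u_bkp P V c = ereal_inf (EFin @` B).
  by congr (ereal_inf (image _ _)); apply/seteqP; split => u /=;
    rewrite integral_excess lee_fin.
have [[u Bu]|B0] := pselect (B !=set0)%classic; [right|left].
  have lbB : has_lbound B.
    by exists (mu - c)%R => v; rewrite /B /=; have := truncmean_le v; lra.
  exists (inf B); first by rewrite bkpE ereal_inf_EFin //; exists u.
  apply: (@inf_sublevel_eq R (fun u => mu - m u)%R) => //; last by split; [exists u|].
  by move=> x y /truncmean_lipschitz; lra.
split=> [|u]; last by rewrite ltNge; apply/negP => Bu; apply: B0; exists u.
rewrite bkpE (_ : B = set0) ?image_set0 ?ereal_inf0 //.
by apply/seteqP; split => // u Bu; apply: B0; exists u.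
Qed.

Lemma integral_W_OI_min (r : R) :
  \int[P]_w mine (W_OI P V c w) r%:E = (Num.min (c + m r) r)%:E.
Proof.
have [a rsvE a_root] := u_rsv_spec.
under eq_integral do rewrite /W_OI rsvE -EFin_max -EFin_min.
by rewrite integral_minr_maxr -a_root; congr (EFin (Num.min _ _)); lra.
Qed.

Lemma integral_W_NOI_min (r : R) :
  \int[P]_w mine (W_NOI P V c w) r%:E = (Num.min (Num.min (c + m r) r) mu)%:E.
Proof.
have [a rsvE a_root] := u_rsv_spec.
rewrite /W_NOI rsvE; have [[bkpE c_lt]|[b bkpE b_root]] := u_bkp_spec.
  rewrite bkpE ltry; under eq_integral do rewrite miney.
  by rewrite integral_W_OI_min; congr EFin; have := c_lt r; lra_minmax.
rewrite bkpE lte_fin; have [lt_ab|le_ba] := ltP a b; last first.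
  rewrite mean_priceE -EFin_min integral_cst_probability; congr EFin.
  have [le_ra|lt_ar] := leP r a.
    by have := truncmean_lipschitz le_ra; lra_minmax.
  by have := le_truncmean _ _ (le_trans le_ba (ltW lt_ar)); lra_minmax.
under eq_integral do rewrite /W_OI rsvE -EFin_max -!EFin_min -minA.
rewrite integral_minr_maxr; congr EFin.
have := truncmean_lipschitz (ltW lt_ab).
have [le_rb|lt_br] := leP r b.
  by have := le_truncmean _ _ le_rb; lra_minmax.
by have := le_truncmean _ _ (ltW lt_br); lra_minmax.
Qed.

End surrogate_prices.
End truncated_mean.

Theorem mainTheorem1 (d : measure_display) (T : measurableType d)
  (R : realType) (P : probability T R) (V : {RV P >-> R}) (c : R)
  (hV0 : forall w, (0 <= V w)%R)
  (hVint : P.-integrable setT (EFin \o V))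
  (hc : (0 <= c)%R) :
  forall r : R,
    mine (c%:E + 'E_P[fun w => Num.min (V w) r]) r%:E
      = \int[P]_w mine (W_OI P V c w) r%:E
  /\
    mine (mine (c%:E + 'E_P[fun w => Num.min (V w) r]) r%:E) (mean_price P V)
      = \int[P]_w mine (W_NOI P V c w) r%:E.
Proof.
move=> r.
have -> : 'E_P[fun w => Num.min (V w) r] = (truncmean P V r)%:E.
  by rewrite unlock truncmeanE.
rewrite integral_W_OI_min // integral_W_NOI_min // mean_priceE //.
by rewrite -EFinD -!EFin_min.
Qed.
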